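(* Let $\mathcal{H} = \mathbb{C}^{d_1} \otimes \cdots \otimes \mathbb{C}^{d_n}$ and let $|\psi\rangle \in \mathcal{H}$ be a generic unit vector, i.e. $|\psi\rangle$ is not a product state and its best product state approximation is unique up to a global phase. Let $\lambda = \max_{|\pi\rangle} |\langle \pi|\psi\rangle|$ (maximum over product states), and let $|\pi\rangle$ be a best product state approximation chosen (by fixing its phase) so that $\langle \pi|\psi\rangle = \lambda > 0$. Define $$|\eta\rangle = \frac{1}{\sqrt{1-\lambda^2}} \left(\mathbb{1} - |\pi\rangle\langle\pi|\right)|\psi\rangle,$$ and for a step size $\theta > 0$ define the updated state $$|\tilde\psi\rangle = \frac{|\psi\rangle + \theta|\eta\rangle}{\| |\psi\rangle + \theta |\eta\rangle \|}.$$ Then there exists $\Theta > 0$ such that for every $\theta$ with $0 < \theta < \Theta$ one has $G(|\psi\rangle) < G(|\tilde\psi\rangle)$.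
   Context: A product state is a unit vector of the form $|a_1\rangle \otimes \cdots \otimes |a_n\rangle$ with $|a_k\rangle \in \mathbb{C}^{d_k}$. A best product state approximation of a unit vector $|\varphi\rangle$ is a product state $|\pi\rangle$ maximizing $|\langle\pi|\varphi\rangle|^2$ over all product states. The geometric measure of entanglement of a unit vector $|\varphi\rangle$ is $G(|\varphi\rangle) = 1 - \lambda^2(|\varphi\rangle)$, where $\lambda^2(|\varphi\rangle) = \max_{|\pi\rangle \text{ product}} |\langle \pi|\varphi\rangle|^2$. *)

From HB Require Import structures.
From mathcomp Require Import all_boot all_order all_algebra.
From mathcomp Require Import classical_sets reals.
From mathcomp Require Import complex.
Set Implicit Arguments. Unset Strict Implicit. Unset Printing Implicit Defensive.
Import Order.TTheory GRing.Theory Num.Theory.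
Local Open Scope ring_scope.
Local Open Scope complex_scope.
Local Open Scope classical_set_scope.

Section QDefs.
Variables (R : realType) (n : nat) (d : 'I_n -> nat).

(* basis multi-indices of C^{d_1} (x) ... (x) C^{d_n} *)
Definition idx := {dffun forall k : 'I_n, 'I_(d k)}.

Definition vec := idx -> R[i].

Definition inner (u v : vec) : R[i] := \sum_(i : idx) conjc (u i) * v i.

Definition vnorm (v : vec) : R := Num.sqrt (complex.Re (inner v v)).

Definition is_unit (v : vec) : Prop := vnorm v = 1.

Definition is_product_state (v : vec) : Prop :=
  is_unit v /\ exists a : forall k : 'I_n, 'I_(d k) -> R[i],
      forall i : idx, v i = \prod_(k < n) a k (i k).

Definition overlap2 (pi phi : vec) : R := (complex.Re `|inner pi phi|) ^+ 2.

Definition lambda2 (phi : vec) : R :=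
  sup [set overlap2 pi phi | pi in is_product_state].

Definition GM (phi : vec) : R := 1 - lambda2 phi.

Definition is_best_approx (phi pi : vec) : Prop :=
  is_product_state pi /\
  forall pi' : vec, is_product_state pi' -> overlap2 pi' phi <= overlap2 pi phi.

Definition unique_best_approx (phi : vec) : Prop :=
  forall p1 p2 : vec, is_best_approx phi p1 -> is_best_approx phi p2 ->
    exists c : R[i], `|c| = 1 /\ forall i : idx, p2 i = c * p1 i.

End QDefs.

From HB Require Import structures.
From mathcomp Require Import all_boot all_order all_algebra.
From mathcomp Require Import classical_sets reals complex.
From mathcomp Require Import boolp functions topology normedtype derive lra ring.
(* Write a = <p|psi> and b = <p|eta> for a product state p, and
   s = sqrt (1 - lam^2).  Then |psi + t eta|^2 = 1 + 2 s t + t^2, whereas the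
   overlap of p grows to |a|^2 + 2 t Re (conj a b) + t^2 |b|^2.  For the best
   approximation pi, b = 0, so normalization lowers its overlap at first order.
   Product states form a compact set, and by uniqueness of pi up to phase
   every product state either has overlap at least e below lam^2, or has
   first-order gain Re (conj a b) at most s lam^2 / 2.  In both cases the
   normalized overlap is at most lam^2 - min (e/4, t s lam^2/8) for small t,
   so lambda^2 drops and the geometric measure increases. *)

Import Order.TTheory GRing.Theory Num.Theory.
Import numFieldNormedType.Exports ArrowAsProduct.
Local Open Scope ring_scope.
Local Open Scope complex_scope.
Local Open Scope classical_set_scope.

Local Notation Re := complex.Re.
Local Notation Im := complex.Im.

Section SquaredModulus.
Context {R : realType}.
Implicit Types (x y z : R[i]) (t : R).

Definition sqn z : R := Re z ^+ 2 + Im z ^+ 2.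

Lemma complex_ext x y : Re x = Re y -> Im x = Im y -> x = y.
Proof. by case: x y => a b [c e] /= -> ->. Qed.

Lemma complex_ReD x y : Re (x + y) = Re x + Re y. Proof. by case: x y => a b []. Qed.
Lemma complex_ImD x y : Im (x + y) = Im x + Im y. Proof. by case: x y => a b []. Qed.
Lemma complex_ReM x y : Re (x * y) = Re x * Re y - Im x * Im y.
Proof. by case: x y => a b []. Qed.
Lemma complex_ImM x y : Im (x * y) = Re x * Im y + Im x * Re y.
Proof. by case: x y => a b []. Qed.
Lemma complex_ReJ x : Re (conjc x) = Re x. Proof. by case: x. Qed.
Lemma complex_ImJ x : Im (conjc x) = - Im x. Proof. by case: x. Qed.

Lemma sqn_ge0 z : 0 <= sqn z.
Proof. by rewrite addr_ge0 // sqr_ge0. Qed.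

Lemma sqn_eq0 z : (sqn z == 0) = (z == 0).
Proof.
case: z => a b; rewrite /sqn paddr_eq0 ?sqr_ge0 // !sqrf_eq0.
by rewrite eq_complex.
Qed.

Lemma sqn_gt0 z : (0 < sqn z) = (z != 0).
Proof. by rewrite lt_def sqn_ge0 sqn_eq0 andbT. Qed.

Lemma mulJc z : conjc z * z = (sqn z)%:C.
Proof.
apply: complex_ext;
  by rewrite ?complex_ReM ?complex_ImM complex_ReJ complex_ImJ /sqn /=; ring.
Qed.

Lemma sqnM x y : sqn (x * y) = sqn x * sqn y.
Proof. by rewrite /sqn complex_ReM complex_ImM; ring. Qed.

Lemma sqnC t : sqn t%:C = t ^+ 2.
Proof. by rewrite /sqn /= expr0n addr0. Qed.

Lemma sqn_div x y : sqn (x / y) = sqn x / sqn y.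
Proof.
have [->|y0] := eqVneq y 0; first by rewrite invr0 mulr0 /sqn /= expr0n addr0 invr0 mulr0.
have sy : sqn y != 0 by rewrite sqn_eq0.
by apply: (mulIf sy); rewrite -sqnM divfK // divfK.
Qed.

Lemma sqn_addZ x y t :
  sqn (x + t%:C * y) = sqn x + 2 * t * Re (conjc x * y) + t ^+ 2 * sqn y.
Proof.
rewrite /sqn complex_ReD complex_ImD !complex_ReM !complex_ImM complex_ReJ complex_ImJ.
by rewrite /=; ring.
Qed.

Lemma Re_conjM_le x y : 2 * Re (conjc x * y) <= sqn x + sqn y.
Proof.
rewrite complex_ReM complex_ReJ complex_ImJ /sqn -subr_ge0.
have -> : Re x ^+ 2 + Im x ^+ 2 + (Re y ^+ 2 + Im y ^+ 2) -
    2 * (Re x * Re y - - Im x * Im y) = (Re x - Re y) ^+ 2 + (Im x - Im y) ^+ 2.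
  by ring.
by rewrite addr_ge0 ?sqr_ge0.
Qed.

Lemma sqn_le1 z : sqn z <= 1 -> -1 <= Re z <= 1 /\ -1 <= Im z <= 1.
Proof.
rewrite /sqn => h; have := sqr_ge0 (Re z); have := sqr_ge0 (Im z).
by split; apply/andP; split; nra.
Qed.

Lemma sqn_normc z : (Re `|z|) ^+ 2 = sqn z.
Proof. by rewrite normc_def /= sqr_sqrtr // sqn_ge0. Qed.

End SquaredModulus.

Section InnerProduct.
Context {R : realType} {n : nat} {d : 'I_n -> nat}.
Local Notation vec := (@vec R n d).
Implicit Types (u v x y : vec) (c : R[i]).

Lemma innerC u v : inner v u = conjc (inner u v).
Proof.
rewrite /inner rmorph_sum; apply: eq_bigr => i _.
by rewrite rmorphM /= conjcK mulrC.
Qed.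

Lemma inner_addZr u c x y :
  inner u (fun i => x i + c * y i) = inner u x + c * inner u y.
Proof. by rewrite /inner mulr_sumr -big_split; apply: eq_bigr => i _ /=; ring. Qed.

Lemma inner_addZl u c x y :
  inner (fun i => x i + c * y i) u = inner x u + conjc c * inner y u.
Proof. by rewrite innerC inner_addZr rmorphD rmorphM /= -!innerC. Qed.

Lemma inner_Zr u c x : inner u (fun i => c * x i) = c * inner u x.
Proof. by rewrite /inner mulr_sumr; apply: eq_bigr => i _; ring. Qed.

Lemma inner_Zl u c x : inner (fun i => c * x i) u = conjc c * inner x u.
Proof. by rewrite innerC inner_Zr rmorphM /= -innerC. Qed.

Definition nrm2 u : R := \sum_i sqn (u i).

Lemma nrm2_ge0 u : 0 <= nrm2 u.
Proof. by apply: sumr_ge0 => i _; exact: sqn_ge0. Qed.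

Lemma inner_self u : inner u u = (nrm2 u)%:C.
Proof.
by rewrite /nrm2 rmorph_sum /inner; apply: eq_bigr => i _; rewrite mulJc.
Qed.

Lemma vnormE u : vnorm u = Num.sqrt (nrm2 u).
Proof. by rewrite /vnorm inner_self. Qed.

Lemma is_unitE u : is_unit u <-> nrm2 u = 1.
Proof.
rewrite /is_unit vnormE; split => [h|->]; last by rewrite sqrtr1.
by rewrite -[nrm2 u]sqr_sqrtr ?nrm2_ge0 // h expr1n.
Qed.

Lemma nrm2_eq0 u : (nrm2 u == 0) = [forall i, u i == 0].
Proof.
rewrite psumr_eq0 => [|i _]; last exact: sqn_ge0.
apply/idP/idP => [/allP h|/forallP h]; last by apply/allP => i _; rewrite sqn_eq0 h.
by apply/forallP => i; rewrite -sqn_eq0; exact: h (mem_index_enum i).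
Qed.

Lemma unit_entry_neq0 {u} : nrm2 u = 1 -> exists i, u i != 0.
Proof.
move=> u1; apply/existsP; rewrite -negb_forall -nrm2_eq0 u1.
exact: oner_neq0.
Qed.

Lemma sqn_le_nrm2 u i : sqn (u i) <= nrm2 u.
Proof.
rewrite /nrm2 (bigD1 i) //= lerDl; apply: sumr_ge0 => j _; exact: sqn_ge0.
Qed.

Lemma nrm2_Z c x : nrm2 (fun i => c * x i) = sqn c * nrm2 x.
Proof. by rewrite /nrm2 mulr_sumr; apply: eq_bigr => i _; rewrite sqnM. Qed.

Lemma nrm2_addZ x y (t : R) :
  nrm2 (fun i => x i + t%:C * y i) =
  nrm2 x + 2 * t * Re (inner x y) + t ^+ 2 * nrm2 y.
Proof.
rewrite /nrm2 /inner (big_morph _ (@complex_ReD R) (erefl (Re 0))) mulr_sumr mulr_sumr.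
by rewrite -!big_split; apply: eq_bigr => i _; rewrite sqn_addZ.
Qed.

(* Cauchy-Schwarz, from the nonnegativity of the norm of [x - <u|x> u]. *)
Lemma sqn_inner_le u x : nrm2 u = 1 -> sqn (inner u x) <= nrm2 x.
Proof.
move=> u1; set c := inner u x.
pose r := fun i => x i + (- c) * u i.
have r_self : inner r r = (nrm2 x - sqn c)%:C.
  rewrite /r inner_addZl !inner_addZr [inner x u]innerC -/c !inner_self u1.
  by rewrite rmorphN rmorphB /= -mulJc; ring.
by have := nrm2_ge0 r; rewrite -[nrm2 r]/(Re (nrm2 r)%:C) -inner_self r_self subr_ge0.
Qed.

Lemma overlap2E u v : overlap2 u v = sqn (inner u v).
Proof. exact: sqn_normc. Qed.

Lemma overlap2_normalize u v : 0 < nrm2 v ->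
  overlap2 u (fun i => v i / (vnorm v)%:C) = overlap2 u v / nrm2 v.
Proof.
move=> v0; rewrite !overlap2E.
under eq_fun do rewrite mulrC.
by rewrite inner_Zr mulrC sqn_div vnormE sqnC sqr_sqrtr // ltW.
Qed.

End InnerProduct.

Section ComplexContinuity.
Context {R : realType} {T : topologicalType}.
Implicit Types (f g : T -> R) (F G : T -> R[i]).

Lemma continuousR_add f g :
  continuous f -> continuous g -> continuous (fun x => f x + g x).
Proof. by move=> cf cg x; have := @continuousD R R^o T f g x (cf x) (cg x). Qed.

Lemma continuousR_mul f g :
  continuous f -> continuous g -> continuous (fun x => f x * g x).
Proof. by move=> cf cg x; have := @continuousM R T f g x (cf x) (cg x). Qed.

Lemma continuousR_opp f : continuous f -> continuous (fun x => - f x).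
Proof. by move=> cf x; have := @continuousN R R^o T f x (cf x). Qed.

Definition continuousC F :=
  continuous (fun x => Re (F x)) /\ continuous (fun x => Im (F x)).

Lemma continuousC_cst (c : R[i]) : continuousC (fun=> c).
Proof. by split=> x; exact: cst_continuous. Qed.

Lemma continuousC_add F G :
  continuousC F -> continuousC G -> continuousC (fun x => F x + G x).
Proof.
move=> [F1 F2] [G1 G2]; split.
  by under eq_fun do rewrite complex_ReD; exact: continuousR_add.
by under eq_fun do rewrite complex_ImD; exact: continuousR_add.
Qed.

Lemma continuousC_mul F G :
  continuousC F -> continuousC G -> continuousC (fun x => F x * G x).
Proof.
move=> [F1 F2] [G1 G2]; split.
  under eq_fun do rewrite complex_ReM.
  by apply: continuousR_add; [|apply: continuousR_opp]; exact: continuousR_mul.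
by under eq_fun do rewrite complex_ImM; apply: continuousR_add; exact: continuousR_mul.
Qed.

Lemma continuousC_conj F : continuousC F -> continuousC (fun x => conjc (F x)).
Proof.
move=> [F1 F2]; split; first by under eq_fun do rewrite complex_ReJ.
by under eq_fun do rewrite complex_ImJ; exact: continuousR_opp.
Qed.

Lemma continuousC_sum (I : Type) (r : seq I) (P : pred I) (F : I -> T -> R[i]) :
  (forall j, continuousC (F j)) -> continuousC (fun x => \sum_(j <- r | P j) F j x).
Proof.
move=> cF; rewrite -fct_sumE.
by apply: big_ind => //; [exact: continuousC_cst | exact: continuousC_add].
Qed.

Lemma continuousC_prod (I : Type) (r : seq I) (P : pred I) (F : I -> T -> R[i]) :
  (forall j, continuousC (F j)) -> continuousC (fun x => \prod_(j <- r | P j) F j x).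
Proof.
move=> cF; rewrite -fct_prodE.
by apply: big_ind => //; [exact: continuousC_cst | exact: continuousC_mul].
Qed.

Lemma continuous_sqn F : continuousC F -> continuous (fun x => sqn (F x)).
Proof.
by move=> [F1 F2]; apply: continuousR_add; rewrite ?expr2; apply: continuousR_mul.
Qed.

End ComplexContinuity.

Section ProductParametrization.
Context {R : realType} {n : nat} {d : 'I_n -> nat}.
Local Notation vec := (@vec R n d).
Local Notation idx := (@idx n d).

Lemma continuousC_inner {T : topologicalType} (U V : T -> vec) :
  (forall i, continuousC (fun x => U x i)) ->
  (forall i, continuousC (fun x => V x i)) ->
  continuousC (fun x => inner (U x) (V x)).
Proof.
move=> cU cV; apply: continuousC_sum => i.
by apply: continuousC_mul => //; exact: continuousC_conj.
Qed.

(* Real coordinates of a product vector: a global scalar ([None]) and every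
   entry of every factor ([Some]), each split into real and imaginary part. *)
Definition coord := (option {k : 'I_n & 'I_(d k)} * bool)%type.

Definition entry (x : coord -> R) t : R[i] := x (t, false) +i* x (t, true).

Definition product_of (x : coord -> R) : vec := fun i =>
  entry x None * \prod_(k < n) entry x (Some (Tagged (fun k => 'I_(d k)) (i k))).

Lemma continuousC_product_of (i : idx) :
  continuousC (fun x : coord -> R => product_of x i).
Proof.
have entry_cont t : continuousC (fun x : coord -> R => entry x t).
  by split; exact: (@proj_continuous coord (fun _ => R)).
by apply: continuousC_mul => //; apply: continuousC_prod.
Qed.

Lemma product_of_state x :
  (0 < n)%N -> nrm2 (product_of x) = 1 -> is_product_state (product_of x).
Proof.
move=> n_gt0 x1; split; first exact/is_unitE.
pose k0 : 'I_n := Ordinal n_gt0.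
exists (fun k j => (if k == k0 then entry x None else 1) *
                   entry x (Some (Tagged (fun k => 'I_(d k)) j))).
move=> i; rewrite /product_of big_split /=; congr (_ * _).
by rewrite (bigD1 k0) //= big1 ?mulr1 // => k /negbTE ->.
Qed.

(* Normalizing every factor by its entry of largest modulus puts all
   coordinates in [-1, 1]. *)
Lemma product_state_of {p : vec} : is_product_state p ->
  exists2 x : coord -> R, (forall t, -1 <= x t <= 1) & p = product_of x.
Proof.
move=> [/is_unitE p1 [a pE]]; have [i0 pi0] := unit_entry_neq0 p1.
have a_neq0 k : a k (i0 k) != 0.
  by move: pi0; rewrite pE => /prodf_neq0; apply.
pose jm k := [arg max_(j > i0 k) sqn (a k j)]%O.
have jmP k j : sqn (a k j) <= sqn (a k (jm k)).
  by rewrite /jm; case: arg_maxP => // j' _; apply.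
pose m k := a k (jm k).
have m_gt0 k : 0 < sqn (m k).
  by apply: lt_le_trans (jmP k (i0 k)); rewrite sqn_gt0.
pose M := \prod_(k < n) m k.
pose x : coord -> R := fun t =>
  let z := if t.1 is Some kj then a (tag kj) (tagged kj) / m (tag kj) else M in
  if t.2 then Im z else Re z.
have entryN : entry x None = M by apply: complex_ext.
have entryS k j : entry x (Some (Tagged _ j)) = a k j / m k.
  by apply: complex_ext.
have box z t : sqn z <= 1 -> -1 <= (if t then Im z else Re z) <= 1.
  by move=> /sqn_le1 []; case: t.
exists x => [[[[k j]|] t]|]; rewrite /x /=.
- apply: box; rewrite sqn_div ler_pdivrMr // mul1r; exact: jmP.
- apply: box; rewrite -p1 (_ : M = p [ffun k => jm k]) ?sqn_le_nrm2 //.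
  by rewrite pE; apply: eq_bigr => k _; rewrite ffunE.
apply: funext => i; rewrite pE /product_of entryN.
under [in RHS]eq_bigr do rewrite entryS.
rewrite /M -big_split /=; apply: eq_bigr => k _.
by rewrite mulrC divfK // -sqn_gt0.
Qed.

End ProductParametrization.

Lemma compact_gap {R : realType} {T : topologicalType} {K : set T} {f : T -> R} {M : R} :
  compact K -> {within K, continuous f} -> (forall x, K x -> f x < M) ->
  exists2 e, 0 < e & forall x, K x -> f x <= M - e.
Proof.
move=> cK cf fM; have [K0|K0] := pselect (K !=set0); last first.
  by exists 1 => // x Kx; exfalso; apply: K0; exists x.
have [c /set_mem Kc cmax] := compact_EVT_max K0 cK cf.
exists (M - f c); first by rewrite subr_gt0 fM.
by move=> x Kx; rewrite opprB addrC subrK; apply: cmax; exact: mem_set.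
Qed.

(* The product states with [kap <= Re (conj <p|psi> <p|w>)] form a compact
   set containing no best approximation: by uniqueness those are the phase
   multiples of [pi], which are orthogonal to [w]. *)
Lemma best_approx_gap {R : realType} {n : nat} {d : 'I_n -> nat}
    {psi pi w : vec R d} {kap : R} :
  (0 < n)%N -> unique_best_approx psi -> is_best_approx psi pi ->
  inner pi w = 0 -> 0 < kap ->
  exists2 e, 0 < e & forall p, is_product_state p ->
    overlap2 p psi <= overlap2 pi psi - e \/
    Re (conjc (inner p psi) * inner p w) < kap.
Proof.
move=> n_gt0 uniq [pi_state pi_max] pi_w kap_gt0.
pose f x := overlap2 (product_of x) psi.
pose g x := Re (conjc (inner (product_of x) psi) * inner (product_of x) w).
pose h x := nrm2 (@product_of R n d x).
have cinner v : continuousC (fun x => inner (product_of x) v).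
  apply: continuousC_inner => i; first exact: continuousC_product_of.
  exact: continuousC_cst.
have f_cont : continuous f.
  rewrite (_ : f = fun x => sqn (inner (product_of x) psi)); last first.
    by apply/funext => x; rewrite /f overlap2E.
  by apply: continuous_sqn; exact: cinner.
have [g_cont _] : continuousC (fun x =>
    conjc (inner (product_of x) psi) * inner (product_of x) w).
  by apply: continuousC_mul; [apply: continuousC_conj|]; exact: cinner.
have h_cont : continuous h.
  have [cRe _] : continuousC (fun x => inner (@product_of R n d x) (product_of x)).
    by apply: continuousC_inner => i; exact: continuousC_product_of.
  rewrite (_ : h = fun x => Re (inner (product_of x) (product_of x))) //.
  by apply/funext => x; rewrite inner_self.
pose K := [set x | forall t, `[-1, 1]%classic (x t)] `&`
          [set x | h x = 1] `&` [set x | kap <= g x].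
have K_compact : compact K.
  apply: compact_closedI; first apply: compact_closedI.
  - exact: (tychonoff (fun _ => @segment_compact R (-1) 1)).
  - apply: (preimage_closed (f := h) (D := [set y | y = 1])) => [x _|].
      exact: h_cont.
    exact: closed_eq.
  - apply: (preimage_closed (f := g) (D := [set y | kap <= y])) => [x _|].
      exact: g_cont.
    exact: closed_ge.
have K_lt x : K x -> f x < overlap2 pi psi.
  move=> [[_ x1] gx]; have x_state := product_of_state x n_gt0 x1.
  rewrite lt_def pi_max // andbT; apply/eqP => fx; move: gx; apply/negP.
  have x_best : is_best_approx psi (product_of x).
    by split=> // p p_state; rewrite /f in fx; rewrite -fx; exact: pi_max.
  have [u [_ xE]] := uniq _ _ (conj pi_state pi_max) x_best.
  rewrite /g (_ : product_of x = fun i => u * pi i); last exact: funext.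
  by rewrite !inner_Zl pi_w mulr0 mulr0 -ltNge.
have [e e_gt0 eK] := compact_gap K_compact (continuous_subspaceT f_cont) K_lt.
exists e => // p p_state; have [x x_box pE] := product_state_of p_state.
have x1 : h x = 1 by rewrite /h -pE; exact/is_unitE/p_state.1.
rewrite pE; have [gx|gx] := lerP kap (g x); [left|by right].
by apply: eK; split; [split|] => // t; rewrite /= in_itv /=; exact: x_box.
Qed.

Section ProductStates.
Context {R : realType} {n : nat} {d : 'I_n -> nat}.
Local Notation vec := (@vec R n d).
Local Notation idx := (@idx n d).

Lemma lambda2_le {phi p0 : vec} {c : R} : is_product_state p0 ->
  (forall p, is_product_state p -> overlap2 p phi <= c) -> lambda2 phi <= c.
Proof.
move=> p0_state le_c; apply: ge_sup; first by exists (overlap2 p0 phi), p0.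
by move=> _ [p p_state <-]; exact: le_c.
Qed.

Lemma lambda2_best_approx {phi pi : vec} :
  is_best_approx phi pi -> lambda2 phi = overlap2 pi phi.
Proof.
move=> [pi_state pi_max]; apply/eqP; rewrite eq_le (lambda2_le pi_state) //=.
apply: sup_upper_bound; last by exists pi.
split; first by exists (overlap2 pi phi), pi.
by exists (overlap2 pi phi) => _ [p p_state <-]; exact: pi_max.
Qed.

Definition basis_vec (i : idx) : vec := fun j => (j == i)%:R.

Lemma basis_vec_state i : is_product_state (basis_vec i).
Proof.
split.
  rewrite is_unitE /nrm2 (bigD1 i) //= big1 => [|j /negbTE ji]; last first.
    by rewrite /basis_vec ji sqnC expr0n.
  by rewrite /basis_vec eqxx sqnC expr1n addr0.
exists (fun k j => (j == i k)%:R) => j; rewrite /basis_vec.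
have [->|ji] := eqVneq j i; first by rewrite big1 // => k _; rewrite eqxx.
have [k jk] : exists k, j k != i k.
  apply/existsP; rewrite -negb_forall; apply: contra ji => /forallP ji.
  by apply/eqP/ffunP => k; exact/eqP/ji.
by rewrite (bigD1 k) //= (negbTE jk) mul0r.
Qed.

Lemma inner_basis_vec i (v : vec) : inner (basis_vec i) v = v i.
Proof.
rewrite /inner (bigD1 i) //= big1 => [|j /negbTE ji]; last first.
  by rewrite /basis_vec ji conjc0 mul0r.
by rewrite /basis_vec eqxx conjc1 mul1r addr0.
Qed.

End ProductStates.

Lemma ascent_ineq {R : realType} (lam s t e : R) (a b : R[i]) :
  0 < lam -> 0 < s -> s ^+ 2 = 1 - lam ^+ 2 ->
  sqn a <= lam ^+ 2 -> sqn b <= 1 ->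
  0 < e -> 0 < t -> t <= 1 -> t <= e / 4 -> t <= lam ^+ 2 / 2 ->
  sqn a <= lam ^+ 2 - e \/ Re (conjc a * b) <= s * lam ^+ 2 / 2 ->
  sqn (a + t%:C * b) / (1 + 2 * s * t + t ^+ 2)
    <= lam ^+ 2 - Num.min (e / 4) (t * s * lam ^+ 2 / 8).
Proof.
move=> lam_gt0 s_gt0 s2 a_le b_le e_gt0 t_gt0 t1 te tlam dich.
have X_ge0 := sqn_ge0 (a + t%:C * b).
rewrite sqn_addZ in X_ge0 *.
have ab := Re_conjM_le a b; have a0 := sqn_ge0 a; have b0 := sqn_ge0 b.
set A := sqn a in a_le ab a0 dich X_ge0 *; set B := sqn b in b_le ab b0 X_ge0 *.
set P := Re (conjc a * b) in ab dich X_ge0 *.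
set N := 1 + 2 * s * t + t ^+ 2.
set m := Num.min (e / 4) (t * s * lam ^+ 2 / 8).
have lam2_gt0 : 0 < lam ^+ 2 by exact: exprn_gt0.
have ts_gt0 : 0 < t * s by exact: mulr_gt0.
have m_gt0 : 0 < m by rewrite lt_min !divr_gt0 // mulr_gt0.
have lam1 : lam ^+ 2 <= 1 by have := sqr_ge0 s; lra.
have s1 : s <= 1 by rewrite -(ler_pXn2r (isT : (0 < 2)%N)) ?nnegrE ?ltW // expr1n; lra.
have st1 : s * t <= 1 by rewrite -(mulr1 1) ler_pM // ltW.
have t2 : t ^+ 2 <= t by rewrite expr2 ler_piMr // ltW.
have N1 : 1 <= N by have := sqr_ge0 t; rewrite /N; nra.
have N4 : N <= 4 by rewrite /N; lra.
have tB : t ^+ 2 * B <= t ^+ 2 by rewrite ler_piMr ?sqr_ge0.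
have P1 : P <= 1 by lra.
rewrite ler_pdivrMr; last lra.
case: dich => [Ae|Ps].
  have m_le : m <= e / 4 by rewrite ge_min lexx.
  have tP : 2 * t * P <= 2 * t by nra.
  have X_le : A + 2 * t * P + t ^+ 2 * B <= lam ^+ 2 - e / 4 by lra.
  have := ler_wpM2l (_ : 0 <= lam ^+ 2 - m) N1; rewrite mulr1; lra.
have m_le : m <= t * s * lam ^+ 2 / 8 by rewrite ge_min lexx orbT.
have tP : 2 * t * P <= t * s * lam ^+ 2 by nra.
have ts : t * s <= lam ^+ 2 / 2 by nra.
have tss : (t * s) * (t * s) <= (t * s) * (lam ^+ 2 / 2) by rewrite ler_wpM2l // ltW.
have mN : m * N <= t * s * lam ^+ 2 / 2.
  by apply: (le_trans (ler_wpM2r _ m_le)); nra.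
rewrite /N in mN *; nra.
Qed.

Section Ascent.
Context {R : realType} {n : nat} {d : 'I_n -> nat}.
Local Notation vec := (@vec R n d).
Variables (psi pi : vec) (lam : R).
Hypotheses (psi_unit : is_unit psi) (pi_best : is_best_approx psi pi)
  (pi_psi : inner pi psi = lam%:C) (lam_ge0 : 0 <= lam).

Let psi1 : nrm2 psi = 1. Proof. exact/is_unitE. Qed.
Let pi1 : nrm2 pi = 1. Proof. exact/is_unitE/pi_best.1.1. Qed.
Let psi_pi : inner psi pi = lam%:C. Proof. by rewrite innerC pi_psi conjc_real. Qed.

Lemma lambda2_psi : lambda2 psi = lam ^+ 2.
Proof. by rewrite (lambda2_best_approx pi_best) overlap2E pi_psi sqnC. Qed.

Lemma overlap2_le_lambda2 {p} : is_product_state p -> overlap2 p psi <= lam ^+ 2.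
Proof. by rewrite -lambda2_psi (lambda2_best_approx pi_best); exact: pi_best.2. Qed.

Lemma lambda_gt0 : 0 < lam.
Proof.
have [i psi_i] := unit_entry_neq0 psi1.
have := overlap2_le_lambda2 (basis_vec_state i).
rewrite overlap2E inner_basis_vec lt_def lam_ge0 andbT.
by apply: contraTneq => ->; rewrite expr0n -ltNge sqn_gt0.
Qed.

Let w : vec := fun i => psi i + (- lam%:C) * pi i.

Lemma inner_pi_residual : inner pi w = 0.
Proof. by rewrite inner_addZr pi_psi inner_self pi1 mulr1 addrN. Qed.

Lemma nrm2_residual : nrm2 w = 1 - lam ^+ 2.
Proof.
apply: complexI; rewrite -inner_self {2}/w inner_addZr [inner w pi]innerC.
rewrite inner_pi_residual conjc0 mulr0 addr0 inner_addZl inner_self psi1 pi_psi.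
by apply: complex_ext => /=; ring.
Qed.

Lemma lambda_lt1 : ~ is_product_state psi -> lam ^+ 2 < 1.
Proof.
move=> entangled; rewrite lt_def -subr_ge0 -nrm2_residual nrm2_ge0 andbT.
apply/eqP => lam21; apply: entangled.
have lam1 : lam = 1 by apply/eqP; rewrite -sqrp_eq1 // -lam21.
have /forallP w0 : [forall i, w i == 0].
  by rewrite -nrm2_eq0 nrm2_residual -lam21 subrr.
suff -> : psi = pi by exact: pi_best.1.
apply: funext => i; apply/eqP; rewrite -subr_eq0 -mulN1r.
by have := w0 i; rewrite /w lam1.
Qed.

(* Over an empty tensor product every unit vector is a phase and the only
   product state is [1], so [lam = 1]. *)
Lemma dim_gt0 : lam ^+ 2 < 1 -> (0 < n)%N.
Proof.
case: (posnP n) => // n0; rewrite ltNge; apply: contraNT => _.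
have idx0 (i j : idx d) : i = j.
  by apply/ffunP => k; move: (ltn_ord k); rewrite [X in (_ < X)%N]n0.
have [i0 _] := unit_entry_neq0 psi1.
have sum_i0 (V : nmodType) (F : idx d -> V) : \sum_i F i = F i0.
  by rewrite (big_pred1 i0) // => i; rewrite /= (idx0 i i0) eqxx.
have pi_i0 : pi i0 = 1.
  case: pi_best => -[_ [a ->]] _; apply: big1 => k _.
  by move: (ltn_ord k); rewrite [X in (_ < X)%N]n0.
move: psi1; rewrite -sqnC -pi_psi /nrm2 /inner !sum_i0 pi_i0 conjc1 mul1r => ->.
by [].
Qed.

Section Entangled.
Hypotheses (psi_entangled : ~ is_product_state psi)
  (psi_unique : unique_best_approx psi).

Let s := Num.sqrt (1 - lam ^+ 2).
Let eta : vec := fun i => (s^-1)%:C * (psi i - inner pi psi * pi i).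

Let lam_gt0 := lambda_gt0.
Let lam_lt1 := lambda_lt1 psi_entangled.
Let s_gt0 : 0 < s. Proof. by rewrite sqrtr_gt0 subr_gt0. Qed.
Let s2 : s ^+ 2 = 1 - lam ^+ 2. Proof. by rewrite sqr_sqrtr // subr_ge0 ltW. Qed.

Let etaE : eta = fun i => (s^-1)%:C * w i.
Proof. by apply: funext => i; rewrite /eta /w pi_psi mulNr. Qed.

Lemma nrm2_eta : nrm2 eta = 1.
Proof.
by rewrite etaE nrm2_Z nrm2_residual sqnC exprVn -s2 mulVf // gt_eqF ?exprn_gt0.
Qed.

Lemma Re_inner_psi_eta : Re (inner psi eta) = s.
Proof.
rewrite etaE inner_Zr inner_addZr psi_pi inner_self psi1.
transitivity (s^-1 * (1 - lam ^+ 2)); first by rewrite /=; ring.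
by rewrite -s2 expr2 mulKf // gt_eqF.
Qed.

Lemma nrm2_step (t : R) :
  nrm2 (fun i => psi i + t%:C * eta i) = 1 + 2 * s * t + t ^+ 2.
Proof. by rewrite nrm2_addZ Re_inner_psi_eta psi1 nrm2_eta; ring. Qed.

Lemma overlap_dichotomy : exists2 e, 0 < e & forall p, is_product_state p ->
  sqn (inner p psi) <= lam ^+ 2 - e \/
  Re (conjc (inner p psi) * inner p eta) <= s * lam ^+ 2 / 2.
Proof.
have kap_gt0 : 0 < s ^+ 2 * lam ^+ 2 / 2 by rewrite divr_gt0 // mulr_gt0 ?exprn_gt0.
have [e e_gt0 gap] := best_approx_gap (dim_gt0 lam_lt1) psi_unique pi_best
  inner_pi_residual kap_gt0.
exists e => // p p_state; have [le_e|lt_kap] := gap p p_state.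
  by left; rewrite -overlap2E -lambda2_psi (lambda2_best_approx pi_best).
right; rewrite etaE inner_Zr mulrCA complex_ReM /= mul0r subr0.
rewrite -ler_pdivlMl ?invr_gt0 // invrK.
by apply: (le_trans (ltW lt_kap)); rewrite expr2 !mulrA.
Qed.

Theorem entanglement_ascent : exists Theta : R, 0 < Theta /\
  forall theta : R, 0 < theta -> theta < Theta ->
    let v : vec := fun i => psi i + theta%:C * eta i in
    let psit : vec := fun i => v i / (vnorm v)%:C in
    GM psi < GM psit.
Proof.
have [e e_gt0 dichotomy] := overlap_dichotomy.
exists (Num.min 1 (Num.min (e / 4) (lam ^+ 2 / 2))); split.
  by rewrite !lt_min ltr01 !divr_gt0 // exprn_gt0.
move=> t t_gt0; rewrite !lt_min => /andP [/ltW t1 /andP [/ltW te /ltW tlam]].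
cbv zeta; set v := fun i => psi i + t%:C * eta i.
set m := Num.min (e / 4) (t * s * lam ^+ 2 / 8).
have m_gt0 : 0 < m by rewrite lt_min !divr_gt0 // !mulr_gt0 // exprn_gt0.
have nrm2_v : nrm2 v = 1 + 2 * s * t + t ^+ 2 by exact: nrm2_step.
have nrm2_v_gt0 : 0 < nrm2 v.
  by rewrite nrm2_v; have := sqr_ge0 t; have := mulr_gt0 s_gt0 t_gt0; lra.
suff : lambda2 (fun i => v i / (vnorm v)%:C) <= lam ^+ 2 - m.
  by rewrite /GM lambda2_psi; lra.
apply: (lambda2_le pi_best.1) => p p_state.
rewrite overlap2_normalize // overlap2E inner_addZr nrm2_v.
apply: ascent_ineq => //.
- by rewrite -overlap2E; exact: overlap2_le_lambda2.
- by rewrite -nrm2_eta; apply: sqn_inner_le; exact/is_unitE/p_state.1.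
- exact: dichotomy.
Qed.

End Entangled.
End Ascent.

Theorem mainTheorem4 (R : realType) (n : nat) (d : 'I_n -> nat)
    (psi pi : vec R d) :
  is_unit psi ->
  ~ is_product_state psi ->
  unique_best_approx psi ->
  is_best_approx psi pi ->
  inner pi psi = (Num.sqrt (lambda2 psi))%:C ->
  let lam := Num.sqrt (lambda2 psi) in
  let eta : vec R d := fun i =>
    ((Num.sqrt (1 - lam ^+ 2))^-1)%:C * (psi i - inner pi psi * pi i) in
  exists Theta : R, 0 < Theta /\
    forall theta : R, 0 < theta -> theta < Theta ->
      let v : vec R d := fun i => psi i + theta%:C * eta i in
      let psit : vec R d := fun i => v i / (vnorm v)%:C in
      GM psi < GM psit.
Proof.
move=> psi_unit psi_entangled psi_unique pi_best pi_psi lam eta.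
exact: (entanglement_ascent _ _ lam psi_unit pi_best pi_psi (sqrtr_ge0 _)
  psi_entangled psi_unique).
Qed.
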